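(* Consider the network and loss from the context. Let $\overline{\mathbf{P}}$ be a stationary point, let $i_0\in I$, and let $\overline{\mathbf{P}}'$ be obtained from $\overline{\mathbf{P}}$ by unit replication of neuron $i_0$ with coefficients $(\beta_l,\gamma_l)_{l\in L}$ (so $\beta_l>0$ and $\sum_{l\in L}\beta_l\gamma_l=1$). Then $\overline{\mathbf{P}}'$ is a stationary point of the loss of the widened network if and only if at least one of the following holds: (1) every tangential derivative of $\mathcal{L}$ with respect to $\mathbf{w}_{i_0}$ at $\overline{\mathbf{P}}$ equals $0$, i.e. $\sum_{j\in J}\overline{h}_{ji_0}\mathbf{d}_{ji_0}^{\mathbf{v}}\cdot\mathbf{v}=0$ for every tangential direction $\mathbf{v}$ of $\overline{\mathbf{w}}_{i_0}$; (2) $\gamma_l\ge0$ for all $l\in L$. Moreover, if $\overline{\mathbf{P}}$ is a type-1 local minimum, then $\overline{\mathbf{P}}'$ is a type-1 local minimum of the loss of the widened network if and only if at least one of the following holds: (1) every tangential derivative of $\mathcal{L}$ with respect to $\mathbf{w}_{i_0}$ at $\overline{\mathbf{P}}$ equals $0$; (2) $\gamma_l>0$ for all $l\in L$.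
   Context: Fix an integer $d>1$, finite index sets $I$ (hidden), $J$ (output), $K$ (samples), reals $\alpha^+\neq\alpha^-$, $\rho(z)=\alpha^+z$ for $z\ge0$, $\rho(z)=\alpha^-z$ for $z<0$ (componentwise). Parameters $\mathbf{P}$ consist of input weights $\mathbf{w}_i\in\mathbb{R}^d$ and output weights $h_{ji}$ ($i\in I$, $j\in J$); output $\hat{\mathbf{y}}(\mathbf{P};\mathbf{x})_j=\sum_{i\in I}h_{ji}\rho(\mathbf{w}_i\cdot\mathbf{x})$; training data $(\mathbf{x}_k,\mathbf{y}_k)_{k\in K}$; loss $\mathcal{L}(\mathbf{P})=\frac12\sum_k\|\hat{\mathbf{y}}(\mathbf{P};\mathbf{x}_k)-\mathbf{y}_k\|^2$; $e_{kj}=\hat y_{kj}-y_{kj}$. The same definitions apply to a network with any finite hidden index set. Stationary point: $\overline{\mathbf{P}}$ with $\lim_{\alpha\to0^+}\frac{\mathcal{L}(\overline{\mathbf{P}}+\alpha\mathbf{d})-\mathcal{L}(\overline{\mathbf{P}})}{\alpha}\ge0$ for all directions $\mathbf{d}$. Tangential directions of $\mathbf{w}_i$: unit vectors orthogonal to $\mathbf{w}_i$ if $\mathbf{w}_i\ne\mathbf{0}$; any unit vector if $\mathbf{w}_i=\mathbf{0}$. For a tangential direction $\mathbf{v}$, $\mathbf{d}_{ji}^{\mathbf{v}}=\lim_{\Delta\to0^+}\big(\sum_{k:(\mathbf{w}_i+\Delta\mathbf{v})\cdot\mathbf{x}_k>0}\alpha^+e_{kj}\mathbf{x}_k+\sum_{k:(\mathbf{w}_i+\Delta\mathbf{v})\cdot\mathbf{x}_k<0}\alpha^-e_{kj}\mathbf{x}_k\big)$,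 and the tangential derivative $\lim_{\Delta\to0^+}\frac{\mathcal{L}(\ldots,\mathbf{w}_i+\Delta\mathbf{v},\ldots)-\mathcal{L}(\ldots,\mathbf{w}_i,\ldots)}{\Delta}$ equals $\sum_{j}h_{ji}\mathbf{d}_{ji}^{\mathbf{v}}\cdot\mathbf{v}$. Escape neuron: at a stationary point, hidden neuron $i$ is an escape neuron iff there exist $j'\in J$ and a tangential direction $\mathbf{v}$ of $\mathbf{w}_i$ with $\sum_{j}h_{ji}\mathbf{d}_{ji}^{\mathbf{v}}\cdot\mathbf{v}=0$ and $\mathbf{d}_{j'i}^{\mathbf{v}}\cdot\mathbf{v}\ne0$. A type-1 local minimum is a local minimum of the loss (a stationary point) at which no hidden neuron is an escape neuron. Unit replication: given $\mathbf{P}$ and $i_0\in I$, replace neuron $i_0$ by a finite set of new hidden neurons $\{i_0^l: l\in L\}$ with $\mathbf{w}_{i_0^l}=\beta_l\mathbf{w}_{i_0}$ and $h_{ji_0^l}=\gamma_lh_{ji_0}$ for all $j\in J$, where $\beta_l>0$ for all $l$ and $\sum_{l\in L}\beta_l\gamma_l=1$; all other neurons are unchanged. This preserves the network function. *)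

From HB Require Import structures.
From mathcomp Require Import all_boot all_order all_algebra.
From mathcomp Require Import all_classical all_reals all_analysis.
Set Implicit Arguments.
Unset Strict Implicit.
Unset Printing Implicit Defensive.
Import Order.TTheory GRing.Theory Num.Theory.
Import numFieldNormedType.Exports.
Local Open Scope classical_set_scope.
Local Open Scope ring_scope.

Section Network.
Variables (R : realType) (d : nat).
Variables (ap am : R).
Variables (J K : finType) (x : K -> 'rV[R]_d) (y : K -> J -> R).

Definition rho (z : R) : R := if 0 <= z then ap * z else am * z.

Definition dotv (u v : 'rV[R]_d) : R := \sum_(c < d) u ord0 c * v ord0 c.

Section Hidden.
Variable H : finType.

Definition output (w : H -> 'rV[R]_d) (h : J -> H -> R) (z : 'rV[R]_d) (j : J) : R :=
  \sum_(i : H) h j i * rho (dotv (w i) z).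

Definition err (w : H -> 'rV[R]_d) (h : J -> H -> R) (k : K) (j : J) : R :=
  output w h (x k) j - y k j.

Definition loss (w : H -> 'rV[R]_d) (h : J -> H -> R) : R :=
  2^-1 * \sum_(k : K) \sum_(j : J) (err w h k j) ^+ 2.

Definition shift_w (w dw : H -> 'rV[R]_d) (a : R) : H -> 'rV[R]_d :=
  fun i => w i + a *: dw i.
Definition shift_h (h dh : J -> H -> R) (a : R) : J -> H -> R :=
  fun j i => h j i + a * dh j i.

Definition stationary (w : H -> 'rV[R]_d) (h : J -> H -> R) : Prop :=
  forall (dw : H -> 'rV[R]_d) (dh : J -> H -> R),
    exists l : R,
      ((loss (shift_w w dw a) (shift_h h dh a) - loss w h) / a) @[a --> 0^'+] --> l
      /\ 0 <= l.

Definition local_min (w : H -> 'rV[R]_d) (h : J -> H -> R) : Prop :=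
  exists2 e : R, 0 < e &
    forall (w' : H -> 'rV[R]_d) (h' : J -> H -> R),
      (forall i (c : 'I_d), `|w' i ord0 c - w i ord0 c| < e) ->
      (forall j i, `|h' j i - h j i| < e) ->
      loss w h <= loss w' h'.

Definition tangential (wi v : 'rV[R]_d) : Prop :=
  dotv v v = 1 /\ (wi != 0 -> dotv wi v = 0).

Definition dvec (w : H -> 'rV[R]_d) (h : J -> H -> R) (j : J) (i : H)
    (v : 'rV[R]_d) : 'rV[R]_d :=
  lim ((\sum_(k | 0 < dotv (w i + D *: v) (x k)) (ap * err w h k j) *: x k
        + \sum_(k | dotv (w i + D *: v) (x k) < 0) (am * err w h k j) *: x k)
       @[D --> 0^'+]).

Definition tanderiv (w : H -> 'rV[R]_d) (h : J -> H -> R) (i : H)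
    (v : 'rV[R]_d) : R :=
  \sum_(j : J) h j i * dotv (dvec w h j i v) v.

Definition escape_neuron (w : H -> 'rV[R]_d) (h : J -> H -> R) (i : H) : Prop :=
  exists (j' : J) (v : 'rV[R]_d),
    [/\ tangential (w i) v, tanderiv w h i v = 0 & dotv (dvec w h j' i v) v != 0].

Definition type1_local_min (w : H -> 'rV[R]_d) (h : J -> H -> R) : Prop :=
  local_min w h /\ stationary w h /\ forall i : H, ~ escape_neuron w h i.

End Hidden.
End Network.

Definition rep_hidden (I : finType) (i0 : I) (L : finType) : finType :=
  ({i : I | i != i0} + L)%type.

Section Replication.
Variables (R : realType) (d : nat) (J I L : finType) (i0 : I).
Variables (beta gamma : L -> R).

Definition rep_w (w : I -> 'rV[R]_d) : rep_hidden i0 L -> 'rV[R]_d :=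
  fun u => match u with
           | inl i => w (val i)
           | inr l => beta l *: w i0
           end.

Definition rep_h (h : J -> I -> R) : J -> rep_hidden i0 L -> R :=
  fun j u => match u with
             | inl i => h j (val i)
             | inr l => gamma l * h j i0
             end.
End Replication.

(* Along a direction (dw, dh) the loss has the one-sided derivative
   sum_(j,i) dh_ji G_ji + sum_i g_i(dw_i), where G_ji is the partial
   derivative in h_ji and g_i is positively homogeneous; so the stationary
   points are those with G = 0 and all g_i >= 0.  The radial part of g_i is
   a combination of the G_ji, so at a stationary point g_i vanishes iff all
   tangential derivatives of w_i do.

   Unit replication preserves the network function, hence the errors; as
   rho is positively homogeneous, the copy l of i0 gets its G scaled by
   beta_l and its g scaled by gamma_l, which gives the first equivalence.
   For type-1 minima, a copy with gamma_l = 0 is an escape neuron unless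
   g_i0 = 0.  Conversely, a stationary point without escape neurons is a
   local minimum: the directions of w_i are covered by finitely many
   polyhedral cones fixing the activation pattern of the samples with zero
   preactivation; on each cone g_i and its per-output parts D_ij are
   linear, and D_ij vanishes where g_i does (no escape neuron), so Farkas'
   lemma gives |D_ij| <= C g_i.  This bound absorbs the first-order effect
   of perturbing the output weights, and the loss is convex in the errors. *)

From Pilot Require Import Defs.
From HB Require Import structures.
From mathcomp Require Import all_boot all_order all_algebra.
From mathcomp Require Import all_classical all_reals all_analysis.
From mathcomp Require Import ring lra.
Import Order.TTheory GRing.Theory Num.Theory.
Import numFieldNormedType.Exports.
Local Open Scope classical_set_scope.
Local Open Scope ring_scope.
Set Implicit Arguments.
Unset Strict Implicit.
Unset Printing Implicit Defensive.

Section DotProduct.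
Variables (R : realType) (d : nat).
Local Notation dot := (@dotv R d).
Implicit Types u v z : 'rV[R]_d.

Lemma dotC u v : dot u v = dot v u.
Proof. by apply: eq_bigr => c _; rewrite mulrC. Qed.

Lemma dotDl u v z : dot (u + v) z = dot u z + dot v z.
Proof.
by rewrite /dotv -big_split; apply: eq_bigr => c _; rewrite !mxE mulrDl.
Qed.

Lemma dotZl a u z : dot (a *: u) z = a * dot u z.
Proof.
by rewrite /dotv mulr_sumr; apply: eq_bigr => c _; rewrite !mxE mulrA.
Qed.

Lemma dotNl u z : dot (- u) z = - dot u z.
Proof. by rewrite -scaleN1r dotZl mulN1r. Qed.

Lemma dotBl u v z : dot (u - v) z = dot u z - dot v z.
Proof. by rewrite dotDl dotNl. Qed.

Lemma dot0l z : dot 0 z = 0.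
Proof. by rewrite -(scale0r 0) dotZl mul0r. Qed.

Lemma dotZr a u z : dot z (a *: u) = a * dot z u.
Proof. by rewrite dotC dotZl dotC. Qed.

Lemma dotBr u v z : dot z (u - v) = dot z u - dot z v.
Proof. by rewrite !(dotC z) dotBl. Qed.

Lemma dot_sumZl (T : finType) (c : T -> R) (l : T -> 'rV[R]_d) z :
  dot (\sum_k c k *: l k) z = \sum_k c k * dot (l k) z.
Proof.
elim/big_rec2: _ => [|k a b _ IH]; first by rewrite dot0l.
by rewrite dotDl dotZl IH.
Qed.

Lemma dotvv_ge0 u : 0 <= dot u u.
Proof. by rewrite sumr_ge0 // => c _; rewrite -expr2 sqr_ge0. Qed.

Lemma dotvv_eq0 u : (dot u u == 0) = (u == 0).
Proof.
apply/idP/eqP => [|->]; last by rewrite dot0l.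
rewrite psumr_eq0 => [/allP uu0|c _]; last by rewrite -expr2 sqr_ge0.
apply/rowP => c; rewrite mxE; apply/eqP.
by rewrite -sqrf_eq0 expr2 (eqP (uu0 c (mem_index_enum c))).
Qed.

Lemma dot_rank1_adjoint v m u0 u c :
  dot (v - (dot v u0 * c) *: m) u = dot v (u - (dot m u * c) *: u0).
Proof. by rewrite dotBl dotBr dotZl dotZr; ring. Qed.

Lemma dot_entry_bound e u z : (forall c, `|u ord0 c| <= e) ->
  `|dot u z| <= e * \sum_c `|z ord0 c|.
Proof.
move=> ue; rewrite mulr_sumr; apply: le_trans (ler_norm_sum _ _ _) _.
by apply: ler_sum => c _; rewrite normrM ler_wpM2r.
Qed.

Lemma tangential_decomposition wi u : (exists c, u = c *: wi) \/
  exists v s c, [/\ tangential wi v, 0 < s & u = s *: v + c *: wi].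
Proof.
pose c := if wi == 0 then 0 else dot u wi / dot wi wi.
pose p := u - c *: wi.
have up : u = p + c *: wi by rewrite /p subrK.
have [p0|p0] := eqVneq p 0; first by left; exists c; rewrite up p0 add0r.
right; have pp_gt0 : 0 < dot p p by rewrite lt_def dotvv_eq0 p0 dotvv_ge0.
pose s := Num.sqrt (dot p p).
have s_gt0 : 0 < s by rewrite sqrtr_gt0.
exists (s^-1 *: p), s, c; split=> //; last first.
  by rewrite scalerA mulfV ?gt_eqF // scale1r.
split=> [|wi0].
  rewrite dotZl dotZr mulrA -expr2 exprVn sqr_sqrtr ?ltW //.
  by rewrite mulVf // gt_eqF.
have ww0 : dot wi wi != 0 by rewrite dotvv_eq0.
by rewrite dotZr /p dotBr dotZr /c (negPf wi0) mulfVK // dotC subrr mulr0.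
Qed.

End DotProduct.

(** * Polyhedral cones *)

Section Farkas.
Variables (R : realType) (d : nat) (T : finType).
Local Notation dot := (@dotv R d).

Lemma cone_cons (l : T -> 'rV[R]_d) m s a mu (lam : T -> R) : m \notin s ->
  0 <= mu -> (forall k, 0 <= lam k) ->
  a = mu *: l m + \sum_(k <- s) lam k *: l k ->
  exists2 lam' : T -> R, forall k, 0 <= lam' k &
    a = \sum_(k <- m :: s) lam' k *: l k.
Proof.
move=> ms mu_ge0 lam_ge0 ->; exists (fun k => if k == m then mu else lam k).
  by move=> k; case: ifP.
rewrite big_cons eqxx; congr (_ + _); rewrite !big_seq; apply: eq_bigr => k ks.
by rewrite ifN //; apply: contraNneq ms => <-.
Qed.

Lemma rank1_unproject (l : T -> 'rV[R]_d) s m u0 a c (lam : T -> R) :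
  a - (dot a u0 * c) *: m =
    \sum_(k <- s) lam k *: (l k - (dot (l k) u0 * c) *: m) ->
  a = ((dot a u0 - \sum_(k <- s) lam k * dot (l k) u0) * c) *: m
      + \sum_(k <- s) lam k *: l k.
Proof.
move=> Ea; rewrite -{1}(subrK ((dot a u0 * c) *: m) a) Ea.
under eq_bigr => k _ do rewrite scalerBr scalerA.
rewrite sumrB -scaler_suml.
have -> : \sum_(k <- s) lam k * (dot (l k) u0 * c)
    = (\sum_(k <- s) lam k * dot (l k) u0) * c.
  by rewrite mulr_suml; apply: eq_bigr => k _; rewrite mulrA.
by rewrite mulrBl scalerBl addrC addrA [RHS]addrAC.
Qed.

(* Induction on the generators: if [a] is not already in the cone of the
   tail, a witness [u0] separates it, and projecting along [u0] onto the
   hyperplane orthogonal to [l m] reduces to the tail. *)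
Lemma farkas_seq (s : seq T) (l : T -> 'rV[R]_d) a : uniq s ->
  (forall u, (forall k, k \in s -> 0 <= dot (l k) u) -> 0 <= dot a u) ->
  exists2 lam : T -> R, forall k, 0 <= lam k & a = \sum_(k <- s) lam k *: l k.
Proof.
elim: s l a => [|m s IH] l a /=.
  move=> _ a_ge0; exists (fun=> 0) => //; rewrite big_nil; apply/eqP.
  by rewrite -dotvv_eq0 eq_le dotvv_ge0 -oppr_ge0 -mulN1r -dotZr a_ge0.
move=> /andP[ms uniq_s] a_ge0.
have [a_ge0_s|] := boolp.pselect
  (forall u, (forall k, k \in s -> 0 <= dot (l k) u) -> 0 <= dot a u).
  have [lam lam_ge0 Ea] := IH l a uniq_s a_ge0_s.
  by apply: (cone_cons ms (lexx (0 : R)) lam_ge0); rewrite scale0r add0r.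
move=> /boolp.existsNP[u0 /boolp.not_implyP[u0_s /negP]].
rewrite -ltNge => au0.
have lu0 : dot (l m) u0 < 0.
  rewrite ltNge; apply: contraTN au0 => lu0; rewrite -leNgt a_ge0 // => k.
  by rewrite inE => /orP[/eqP->|]; last exact: u0_s.
pose c := (dot (l m) u0)^-1.
pose proj v := v - (dot v u0 * c) *: l m.
have lm_proj_orth u : dot (l m) (u - (dot (l m) u * c) *: u0) = 0.
  by rewrite dotBr dotZr mulfVK ?subrr // lt_eqF.
have [lam lam_ge0 Ea] : exists2 lam : T -> R, forall k, 0 <= lam k &
    proj a = \sum_(k <- s) lam k *: proj (l k).
  apply: IH => // u u_s; rewrite dot_rank1_adjoint a_ge0 // => k.
  rewrite inE => /orP[/eqP->|ks]; first by rewrite lm_proj_orth.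
  by rewrite -dot_rank1_adjoint u_s.
apply: (cone_cons ms _ lam_ge0 (rank1_unproject Ea)).
apply: mulr_le0; last by rewrite invr_le0 ltW.
rewrite subr_le0 (le_trans (ltW au0)) // big_seq sumr_ge0 // => k ks.
by rewrite mulr_ge0 ?u0_s.
Qed.

Lemma farkas (l : T -> 'rV[R]_d) a :
  (forall u, (forall k, 0 <= dot (l k) u) -> 0 <= dot a u) ->
  exists2 lam : T -> R, forall k, 0 <= lam k & a = \sum_k lam k *: l k.
Proof.
move=> a_ge0; apply: farkas_seq (index_enum_uniq T) _ => u u_ge0.
by apply: a_ge0 => k; rewrite u_ge0 ?mem_index_enum.
Qed.

End Farkas.

Section ConeBound.
Variables (R : realType) (d : nat) (T : finType) (l : T -> 'rV[R]_d).
Local Notation dot := (@dotv R d).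

Section Face.
Variables (lam : T -> R).
Hypothesis lam_ge0 : forall k, 0 <= lam k.
Local Notation A := (\sum_k lam k *: l k).

Definition face_gen (t : T + T) : 'rV[R]_d :=
  match t with inl k => l k | inr k => if 0 < lam k then - l k else 0 end.

Lemma face_genP u : (forall t, 0 <= dot (face_gen t) u) ->
  (forall k, 0 <= dot (l k) u) /\ dot A u = 0.
Proof.
move=> u_ge0; have l_ge0 k : 0 <= dot (l k) u := u_ge0 (inl k).
split=> //; rewrite dot_sumZl big1 // => k _; move: (u_ge0 (inr k)) => /=.
case: ltP => [_|lam_le0 _]; last first.
  have -> : lam k = 0 by apply/le_anti; rewrite lam_le0 lam_ge0.
  by rewrite mul0r.
rewrite dotNl oppr_ge0 => lu_le0.
have -> : dot (l k) u = 0 by apply/le_anti; rewrite lu_le0 l_ge0.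
by rewrite mulr0.
Qed.

Lemma face_gen_bound (mu : T + T -> R) : (forall t, 0 <= mu t) ->
  exists2 c, 0 <= c & forall u, (forall k, 0 <= dot (l k) u) ->
    - dot (\sum_t mu t *: face_gen t) u <= c * dot A u.
Proof.
move=> mu_ge0.
exists (\sum_k if 0 < lam k then mu (inr k) / lam k else 0).
  by apply: sumr_ge0 => k _; case: ifP => // lam_gt0; rewrite divr_ge0 // ltW.
move=> u l_ge0.
have lam_l_le_A k : lam k * dot (l k) u <= dot A u.
  rewrite dot_sumZl (bigD1 k) //= lerDl sumr_ge0 // => i _.
  by rewrite mulr_ge0.
rewrite dot_sumZl big_sumType /= opprD mulr_suml -[X in _ <= X]add0r.
apply: lerD; first by rewrite oppr_le0 sumr_ge0 // => k _; rewrite mulr_ge0.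
rewrite -sumrN; apply: ler_sum => k _ /=; case: ifP => [lam_gt0|_]; last first.
  by rewrite dot0l mulr0 oppr0 mul0r.
rewrite dotNl mulrN opprK -mulrA ler_wpM2l //.
by rewrite ler_pdivlMl.
Qed.

End Face.

Lemma cone_linear_bound (A B : 'rV[R]_d) :
  (forall u, (forall k, 0 <= dot (l k) u) -> 0 <= dot A u) ->
  (forall u, (forall k, 0 <= dot (l k) u) -> dot A u = 0 -> dot B u = 0) ->
  exists2 c, 0 <= c & forall u, (forall k, 0 <= dot (l k) u) ->
    `|dot B u| <= c * dot A u.
Proof.
move=> A_ge0 B0; have [lam lam_ge0 EA] := farkas A_ge0.
have B0_face u : (forall t, 0 <= dot (face_gen lam t) u) -> dot B u = 0.
  by move=> /(face_genP lam_ge0)[l_ge0 Au0]; apply: B0; rewrite ?EA.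
have [mu mu_ge0 EmB] : exists2 mu, forall t, 0 <= mu t &
    - B = \sum_t mu t *: face_gen lam t.
  by apply: farkas => u /B0_face; rewrite dotNl => ->; rewrite oppr0.
have [nu nu_ge0 EB] : exists2 nu, forall t, 0 <= nu t &
    B = \sum_t nu t *: face_gen lam t.
  by apply: farkas => u /B0_face ->.
have [c1 c1_ge0 Bup] := face_gen_bound lam_ge0 mu_ge0.
have [c2 c2_ge0 Blo] := face_gen_bound lam_ge0 nu_ge0.
exists (c1 + c2); first exact: addr_ge0.
move=> u l_ge0; have := Bup u l_ge0; have := Blo u l_ge0.
have := A_ge0 u l_ge0; rewrite -EA -EmB -EB dotNl opprK => Au_ge0 Bu_ge Bu_le.
have : 0 <= c1 * dot A u by rewrite mulr_ge0.
have : 0 <= c2 * dot A u by rewrite mulr_ge0.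
rewrite mulrDl ler_norml; lra.
Qed.

End ConeBound.

Section Reals.
Variable R : realType.

Lemma cvg_at_right0_quadratic (e o1 o2 : R) :
  (fun a => e * (o1 + a * o2) + 2^-1 * a * (o1 + a * o2) ^+ 2) @ 0^'+
    --> e * o1.
Proof.
have -> : e * o1 = e * (o1 + 0 * o2) + 2^-1 * 0 * (o1 + 0 * o2) ^+ 2.
  by rewrite !(mul0r, mulr0, addr0).
apply: cvg_at_right_filter.
apply: cvgD; apply: cvgM; try apply: cvgM; try apply: cvgD; try apply: cvgM;
  try apply: cvg_cst; try apply: cvg_id.
Qed.

Lemma near_right0_mul_lt (z t : R) : z != 0 ->
  \forall a \near 0^'+, `|a * t| < `|z|.
Proof.
move=> z0; have b0 : 0 < `|z| / (`|t| + 1).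
  by rewrite divr_gt0 ?normr_gt0 // ltr_pwDr.
near=> a.
have a0 : 0 < a by near: a; exact: nbhs_right_gt.
have ab : a < `|z| / (`|t| + 1) by near: a; exact: nbhs_right_lt.
rewrite normrM (gtr0_norm a0); move: ab; rewrite ltr_pdivlMr ?ltr_pwDr // => ab.
by apply: le_lt_trans ab; apply: ler_wpM2l; [exact: ltW | rewrite lerDl].
Unshelve. all: by end_near.
Qed.

Lemma sign_addr_small (z s : R) : `|s| < `|z| ->
  ((0 < z + s) = (0 < z)) /\ ((z + s < 0) = (z < 0)).
Proof.
case: (ltgtP 0 z) => [z0|z0|<-]; last by rewrite normr0 normr_lt0.
  by rewrite (gtr0_norm z0) => /ltr_normlP[]; split; apply/idP/idP; lra.
by rewrite (ltr0_norm z0) => /ltr_normlP[]; split; apply/idP/idP; lra.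
Qed.

Lemma sum_perturbed_weights_ge0 (J : finType) (hj hj' D : J -> R) (g C e : R) :
  0 <= g -> (forall j, `|D j| <= C * g) -> (forall j, `|hj' j - hj j| < e) ->
  e * (C * #|J|%:R) <= 1 -> \sum_j hj j * D j = g -> 0 <= \sum_j hj' j * D j.
Proof.
move=> g_ge0 D_le h_near; rewrite -subr_ge0 => eC Eg.
have -> : \sum_j hj' j * D j = g + \sum_j (hj' j - hj j) * D j.
  by rewrite -Eg -big_split; apply: eq_bigr => j _ /=; ring.
have : - (e * (C * g) *+ #|J|) <= \sum_j (hj' j - hj j) * D j.
  rewrite -sumr_const -sumrN; apply: ler_sum => j _.
  have : `|(hj' j - hj j) * D j| <= e * (C * g).
    by rewrite normrM; apply: ler_pM => //; exact/ltW/h_near.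
  by rewrite ler_norml => /andP[].
have := mulr_ge0 g_ge0 (eC : 0 <= 1 - e * (C * #|J|%:R)).
rewrite -mulr_natr; nra.
Qed.

End Reals.

(** * One-sided derivatives of the loss *)

Section Activation.
Variables (R : realType) (ap am : R).
Local Notation rho := (@rho R ap am).

Definition rho_dir (z t : R) : R :=
  if z == 0 then rho t else (if 0 < z then ap else am) * t.

Lemma rho_pmul c t : 0 <= c -> rho (c * t) = c * rho t.
Proof.
rewrite /Defs.rho le_eqVlt => /orP[/eqP<-|c0].
  by rewrite !mul0r lexx mulr0.
by rewrite pmulr_rge0 //; case: ifP => _; rewrite mulrCA.
Qed.

Lemma rho_dir_pmulr z c t : 0 <= c -> rho_dir z (c * t) = c * rho_dir z t.
Proof.
move=> c0; rewrite /rho_dir.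
by case: ifP => _; [exact: rho_pmul | exact: mulrCA].
Qed.

Lemma rho_dir_pmull b z t : 0 < b -> rho_dir (b * z) t = rho_dir z t.
Proof. by move=> b0; rewrite /rho_dir mulf_eq0 gt_eqF //= pmulr_rgt0. Qed.

Lemma rho_dir0 z : rho_dir z 0 = 0.
Proof. by rewrite /rho_dir /Defs.rho lexx !mulr0; case: ifP. Qed.

Lemma rho_dir_radial z t c : rho_dir z (t + c * z) = rho_dir z t + c * rho z.
Proof.
rewrite /rho_dir /Defs.rho; have [->|z0] := eqVneq z 0.
  by rewrite !mulr0 addr0 lexx mulr0 addr0.
have -> : (0 < z) = (0 <= z) by rewrite lt_def z0.
by case: ifP => _; rewrite mulrDr mulrCA.
Qed.

Lemma rho_add_small z t : (z != 0 -> `|t| < `|z|) ->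
  rho (z + t) = rho z + rho_dir z t.
Proof.
rewrite /rho_dir /Defs.rho; have [->|z0 /(_ isT) tz] := eqVneq z 0.
  by rewrite add0r lexx mulr0 add0r.
have [_ sign_neg] := sign_addr_small tz.
have -> : (0 < z) = (0 <= z) by rewrite lt_def z0.
rewrite [0 <= z + t]leNgt sign_neg -leNgt.
by case: ifP => _; rewrite mulrDr.
Qed.

End Activation.

Section Network.
Variables (R : realType) (d : nat) (ap am : R) (J K : finType).
Variables (x : K -> 'rV[R]_d) (y : K -> J -> R).
Local Notation rho := (@Defs.rho R ap am).
Local Notation rho_dir := (@rho_dir R ap am).
Local Notation dot := (@dotv R d).

Section Hidden.
Variable H : finType.
Implicit Types (w : H -> 'rV[R]_d) (h : J -> H -> R).
Local Notation err := (@err R d ap am J K x y H).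
Local Notation loss := (@loss R d ap am J K x y H).

Definition preact w i k := dot (w i) (x k).

(* These are G_ji, g_i(u) and D_ij(u) of the proof idea: the partial
   derivative of the loss in [h j i], its one-sided derivative in [w i]
   along [u], and the part of the latter due to output [j]. *)
Definition grad_h w h i j := \sum_k err w h k j * rho (preact w i k).

Definition dderiv_wj w h i j u :=
  \sum_k err w h k j * rho_dir (preact w i k) (dot u (x k)).

Definition dderiv_w w h i u := \sum_j h j i * dderiv_wj w h i j u.

Definition dderiv_loss w h (dw : H -> 'rV[R]_d) (dh : J -> H -> R) :=
  \sum_i (\sum_j dh j i * grad_h w h i j + dderiv_w w h i (dw i)).

Lemma dderiv_w0 w h i : dderiv_w w h i 0 = 0.
Proof.
rewrite /dderiv_w big1 // => j _; rewrite /dderiv_wj big1 ?mulr0 // => k _.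
by rewrite dot0l rho_dir0 mulr0.
Qed.

(* Exact, not only to first order: [rho] is linear on each side of 0. *)
Lemma err_perturb w w' h h' k j :
  (forall i, preact w i k != 0 ->
     `|dot (w' i - w i) (x k)| < `|preact w i k|) ->
  err w' h' k j = err w h k j + \sum_i ((h' j i - h j i) * rho (preact w i k)
       + h' j i * rho_dir (preact w i k) (dot (w' i - w i) (x k))).
Proof.
move=> small; rewrite /Defs.err /output addrAC; congr (_ - _).
rewrite -big_split /=; apply: eq_bigr => i _.
have -> : dot (w' i) (x k) = preact w i k + dot (w' i - w i) (x k).
  by rewrite /preact -dotDl addrC subrK.
by rewrite rho_add_small; [ring | exact: small].
Qed.

Lemma err_shift w h dw dh : \forall a \near 0^'+, forall k j,
  err (shift_w w dw a) (shift_h h dh a) k j = err w h k j + a *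
    (\sum_i (dh j i * rho (preact w i k)
             + h j i * rho_dir (preact w i k) (dot (dw i) (x k)))
     + a * \sum_i dh j i * rho_dir (preact w i k) (dot (dw i) (x k))).
Proof.
near=> a.
have a_gt0 : 0 < a by near: a; exact: nbhs_right_gt.
have small (ik : H * K) : preact w ik.1 ik.2 != 0 ->
    `|a * dot (dw ik.1) (x ik.2)| < `|preact w ik.1 ik.2|.
  move: ik; near: a; apply: filter_forall => -[i k] /=.
  have [->|z0] := eqVneq (preact w i k) 0; first exact: nearW.
  by apply: filterS (near_right0_mul_lt (dot (dw i) (x k)) z0) => a lt _.
move=> k j; rewrite (@err_perturb w _ h) => [|i]; last first.
  rewrite /shift_w addrC addKr dotZl; exact: (small (i, k)).
congr (_ + _); rewrite mulrDr !mulr_sumr -big_split; apply: eq_bigr => i _ /=.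
have -> : shift_h h dh a j i - h j i = a * dh j i.
  by rewrite /shift_h addrC addKr.
have -> : shift_w w dw a i - w i = a *: dw i by rewrite /shift_w addrC addKr.
by rewrite dotZl rho_dir_pmulr ?ltW // /shift_h; ring.
Unshelve. all: by end_near.
Qed.

Lemma dderiv_lossE w h dw dh : dderiv_loss w h dw dh =
  \sum_k \sum_j err w h k j * \sum_i (dh j i * rho (preact w i k)
    + h j i * rho_dir (preact w i k) (dot (dw i) (x k))).
Proof.
transitivity (\sum_i \sum_j \sum_k err w h k j * (dh j i * rho (preact w i k)
                 + h j i * rho_dir (preact w i k) (dot (dw i) (x k)))).
  apply: eq_bigr => i _; rewrite /dderiv_w -big_split; apply: eq_bigr => j _.
  rewrite /grad_h /dderiv_wj !mulr_sumr -big_split.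
  by apply: eq_bigr => k _ /=; ring.
rewrite exchange_big [RHS]exchange_big; apply: eq_bigr => j _.
by rewrite exchange_big; apply: eq_bigr => k _; rewrite mulr_sumr.
Qed.

Lemma dderiv_loss_cvg w h dw dh :
  ((loss (shift_w w dw a) (shift_h h dh a) - loss w h) / a) @[a --> 0^'+]
    --> dderiv_loss w h dw dh.
Proof.
pose O1 k j := \sum_i (dh j i * rho (preact w i k)
                       + h j i * rho_dir (preact w i k) (dot (dw i) (x k))).
pose O2 k j := \sum_i dh j i * rho_dir (preact w i k) (dot (dw i) (x k)).
rewrite dderiv_lossE.
apply: (cvg_trans (G := \sum_k \sum_j (err w h k j * (O1 k j + a * O2 k j)
    + 2^-1 * a * (O1 k j + a * O2 k j) ^+ 2) @[a --> 0^'+])); last first.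
  apply: cvg_big => [|k _]; first exact: add_continuous.
  apply: cvg_big => [|j _]; first exact: add_continuous.
  exact: cvg_at_right0_quadratic.
apply: near_eq_cvg; near=> a.
have a_gt0 : 0 < a by near: a; exact: nbhs_right_gt.
have Eerr : forall k j, err (shift_w w dw a) (shift_h h dh a) k j
    = err w h k j + a * (O1 k j + a * O2 k j) by near: a; exact: err_shift.
rewrite /Defs.loss.
under [X in _ = (_ * X - _) / _]eq_bigr => k _ do
  under eq_bigr => j _ do rewrite Eerr.
rewrite -mulrBr -sumrB.
under [X in _ = (_ * X) / _]eq_bigr => k _ do rewrite -sumrB.
rewrite mulr_sumr mulr_suml; apply: eq_bigr => k _.
rewrite mulr_sumr mulr_suml; apply: eq_bigr => j _.
by field; rewrite gt_eqF.
Unshelve. all: by end_near.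
Qed.

Lemma stationary_dderivP w h :
  stationary ap am x y w h <-> forall dw dh, 0 <= dderiv_loss w h dw dh.
Proof.
split=> [st dw dh|ge0 dw dh]; last first.
  exists (dderiv_loss w h dw dh); split; last exact: ge0.
  exact: dderiv_loss_cvg.
have [l [cvg_l l_ge0]] := st dw dh.
have cvg_dd := @dderiv_loss_cvg w h dw dh.
by rewrite (cvg_unique (@norm_hausdorff _ _) cvg_dd cvg_l).
Qed.

Lemma dderiv_loss_ge0P w h :
  (forall dw dh, 0 <= dderiv_loss w h dw dh) <->
  (forall i j, grad_h w h i j = 0) /\ (forall i u, 0 <= dderiv_w w h i u).
Proof.
split=> [ge0|[G0 g_ge0] dw dh]; last first.
  by apply: sumr_ge0 => i _; rewrite big1 ?add0r // => j _; rewrite G0 mulr0.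
have along_h i j c : dderiv_loss w h (fun=> 0)
    (fun j' i' => if (j' == j) && (i' == i) then c else 0) = c * grad_h w h i j.
  rewrite /dderiv_loss (bigD1 i) //= [X in _ + X]big1 => [|i' i'i]; last first.
    by rewrite dderiv_w0 addr0 big1 // => j' _; rewrite (negPf i'i) andbF mul0r.
  rewrite dderiv_w0 !addr0 (bigD1 j) //= !eqxx big1 ?addr0 // => j' j'j.
  by rewrite (negPf j'j) mul0r.
split=> [i j|i u].
  have := ge0 (fun=> 0) (fun j' i' => if (j' == j) && (i' == i) then 1 else 0).
  have := ge0 (fun=> 0) (fun j' i' => if (j' == j) && (i' == i) then -1 else 0).
  by rewrite !along_h mul1r mulN1r oppr_ge0 => G_le0 G_ge0; apply/le_anti/andP.
have := ge0 (fun i' => if i' == i then u else 0) (fun _ _ => 0).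
rewrite /dderiv_loss (bigD1 i) //= eqxx big1 ?add0r => [|j _]; last first.
  exact: mul0r.
rewrite big1 ?addr0 // => i' i'i.
by rewrite (negPf i'i) dderiv_w0 big1 ?add0r // => j _; rewrite mul0r.
Qed.

Lemma dvec_dderiv_wj w h j i v :
  dot (dvec ap am x y w h j i v) v = dderiv_wj w h i j v.
Proof.
pose s k := dot v (x k).
pose pos k := if preact w i k == 0 then 0 < s k else 0 < preact w i k.
pose neg k := if preact w i k == 0 then s k < 0 else preact w i k < 0.
have signs : \forall D \near 0^'+, forall k,
    ((0 < dot (w i + D *: v) (x k)) = pos k) /\
    ((dot (w i + D *: v) (x k) < 0) = neg k).
  apply: filter_forall => k; rewrite /pos /neg.
  have [z0|z0] := eqVneq (preact w i k) 0.
    near=> D; have D0 : 0 < D by near: D; exact: nbhs_right_gt.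
    by rewrite dotDl dotZl -/(preact w i k) z0 add0r pmulr_rgt0 // pmulr_rlt0.
  apply: filterS (near_right0_mul_lt (s k) z0) => D small.
  by rewrite dotDl dotZl; exact: sign_addr_small.
have -> : dvec ap am x y w h j i v =
    \sum_k ((if pos k then ap * err w h k j else 0)
            + (if neg k then am * err w h k j else 0)) *: x k.
  apply: (lim_near_cst (@norm_hausdorff _ _)); apply: filterS signs => D sgn.
  rewrite big_mkcond /= [X in _ + X]big_mkcond /= -big_split /=.
  apply: eq_bigr => k _; have [-> ->] := sgn k.
  by case: (pos k); case: (neg k); rewrite ?scalerDl ?scale0r ?add0r ?addr0.
rewrite dot_sumZl /dderiv_wj; apply: eq_bigr => k _.
rewrite dotC -/(s k) /rho_dir /Defs.rho /pos /neg; case: eqVneq => z0.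
  by case: (ltgtP 0 (s k)) => [s0|s0|<-] /=; [ring|ring|rewrite !mulr0].
case: (ltgtP 0 (preact w i k)) => [_|_|e] /=; [ring | ring |].
by rewrite e eqxx in z0.
Unshelve. all: by end_near.
Qed.

Lemma tanderiv_dderiv_w w h i v : tanderiv ap am x y w h i v = dderiv_w w h i v.
Proof. by apply: eq_bigr => j _; rewrite dvec_dderiv_wj. Qed.

Lemma escape_neuronE w h i : escape_neuron ap am x y w h i <->
  exists j v, [/\ tangential (w i) v, dderiv_w w h i v = 0
                & dderiv_wj w h i j v != 0].
Proof.
split=> -[j [v [tv t0 dv]]]; exists j, v; move: t0 dv;
  by rewrite tanderiv_dderiv_w dvec_dderiv_wj.
Qed.

Lemma dderiv_wj_radial w h i j v s c : 0 <= s ->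
  dderiv_wj w h i j (s *: v + c *: w i) =
  s * dderiv_wj w h i j v + c * grad_h w h i j.
Proof.
move=> s0; rewrite /dderiv_wj /grad_h !mulr_sumr -big_split.
apply: eq_bigr => k _ /=.
by rewrite dotDl !dotZl -/(preact w i k) rho_dir_radial rho_dir_pmulr //; ring.
Qed.

Lemma dderiv_w_radial w h i v s c : 0 <= s -> (forall j, grad_h w h i j = 0) ->
  dderiv_w w h i (s *: v + c *: w i) = s * dderiv_w w h i v.
Proof.
move=> s0 G0; rewrite /dderiv_w mulr_sumr; apply: eq_bigr => j _.
by rewrite dderiv_wj_radial // G0 mulr0 addr0 mulrCA.
Qed.

Lemma tanderiv0P w h i : (forall j, grad_h w h i j = 0) ->
  (forall v, tangential (w i) v -> tanderiv ap am x y w h i v = 0) <->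
  (forall u, dderiv_w w h i u = 0).
Proof.
move=> G0; split=> [tan0 u|g0 v _]; last by rewrite tanderiv_dderiv_w.
have [[c ->]|[v [s [c [tv s_gt0 ->]]]]] := tangential_decomposition (w i) u.
  by rewrite -[c *: w i]add0r -(scale0r 0) dderiv_w_radial // mul0r.
by rewrite dderiv_w_radial ?ltW // -tanderiv_dderiv_w tan0 // mulr0.
Qed.

Lemma dderiv_wj0_of_no_escape w h i : (forall j, grad_h w h i j = 0) ->
  ~ escape_neuron ap am x y w h i ->
  forall u, dderiv_w w h i u = 0 -> forall j, dderiv_wj w h i j u = 0.
Proof.
move=> G0 no_esc u g0 j.
have [[c ->]|[v [s [c [tv s_gt0 Eu]]]]] := tangential_decomposition (w i) u.
  rewrite -[c *: w i]add0r -(scale0r 0) dderiv_wj_radial //.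
  by rewrite G0 mulr0 mul0r addr0.
rewrite Eu dderiv_wj_radial ?ltW // G0 mulr0 addr0.
have [->|Dv0] := eqVneq (dderiv_wj w h i j v) 0; first by rewrite mulr0.
exfalso; apply: no_esc; exists j, v; split; rewrite ?dvec_dderiv_wj //.
rewrite tanderiv_dderiv_w; move: g0; rewrite Eu dderiv_w_radial ?ltW // => /eqP.
by rewrite mulf_eq0 gt_eqF // => /eqP.
Qed.

Section Orthant.
Variables (w : H -> 'rV[R]_d) (h : J -> H -> R) (i : H).

Definition orthant_gen (sg : {ffun K -> bool}) k : 'rV[R]_d :=
  if preact w i k == 0 then (if sg k then x k else - x k) else 0.

Definition orthant_grad (sg : {ffun K -> bool}) j : 'rV[R]_d :=
  \sum_k (err w h k j * if preact w i k == 0 then (if sg k then ap else am)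
                        else (if 0 < preact w i k then ap else am)) *: x k.

Lemma dderiv_wj_orthant sg j u : (forall k, 0 <= dot (orthant_gen sg k) u) ->
  dderiv_wj w h i j u = dot (orthant_grad sg j) u.
Proof.
move=> u_sg; rewrite dot_sumZl; apply: eq_bigr => k _.
rewrite -mulrA; congr (_ * _).
move: (u_sg k); rewrite /orthant_gen /rho_dir /Defs.rho (dotC (x k)).
case: eqVneq => // _; case: (sg k); first by rewrite dotC => ->.
rewrite dotNl dotC oppr_ge0 le_eqVlt => /orP[/eqP->|su].
  by rewrite lexx !mulr0.
by rewrite leNgt su.
Qed.

Lemma dderiv_w_orthant sg u : (forall k, 0 <= dot (orthant_gen sg k) u) ->
  dderiv_w w h i u = dot (\sum_j h j i *: orthant_grad sg j) u.
Proof.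
move=> u_sg; rewrite dot_sumZl; apply: eq_bigr => j _.
by rewrite (dderiv_wj_orthant j u_sg).
Qed.

Lemma orthant_gen_sign u k :
  0 <= dot (orthant_gen [ffun k => 0 <= dot (x k) u] k) u.
Proof.
rewrite /orthant_gen ffunE; case: ifP => _; last by rewrite dot0l.
by case: ifP => // /negbT; rewrite -ltNge dotNl oppr_ge0 => /ltW.
Qed.

Lemma dderiv_wj_bound j : (forall u, 0 <= dderiv_w w h i u) ->
  (forall u, dderiv_w w h i u = 0 -> dderiv_wj w h i j u = 0) ->
  exists2 C, 0 <= C & forall u, `|dderiv_wj w h i j u| <= C * dderiv_w w h i u.
Proof.
move=> g_ge0 g0_D0.
have orthant_bound sg : exists C, 0 <= C /\ forall u,
    (forall k, 0 <= dot (orthant_gen sg k) u) ->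
    `|dderiv_wj w h i j u| <= C * dderiv_w w h i u.
  have A_ge0 u : (forall k, 0 <= dot (orthant_gen sg k) u) ->
      0 <= dot (\sum_j' h j' i *: orthant_grad sg j') u.
    by move=> u_sg; rewrite -(dderiv_w_orthant u_sg).
  have B0 u : (forall k, 0 <= dot (orthant_gen sg k) u) ->
      dot (\sum_j' h j' i *: orthant_grad sg j') u = 0 ->
      dot (orthant_grad sg j) u = 0.
    move=> u_sg; rewrite -(dderiv_w_orthant u_sg).
    by rewrite -(dderiv_wj_orthant j u_sg) => /g0_D0.
  have [C C_ge0 bound] := cone_linear_bound A_ge0 B0.
  exists C; split=> // u u_sg.
  by rewrite (dderiv_wj_orthant j u_sg) (dderiv_w_orthant u_sg) bound.
have [C C_spec] := boolp.choice orthant_bound.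
exists (\sum_sg C sg) => [|u].
  by apply: sumr_ge0 => sg _; case: (C_spec sg).
pose sg_u := [ffun k => 0 <= dot (x k) u].
have [_ /(_ u (orthant_gen_sign u)) bound] := C_spec sg_u.
apply: le_trans bound _; rewrite ler_wpM2r // (bigD1 sg_u) //=.
by rewrite lerDl sumr_ge0 // => sg _; case: (C_spec sg).
Qed.

End Orthant.

(** * Stationary points without escape neurons are local minima *)

Lemma loss_sub_ge w h w' h' :
  \sum_k \sum_j err w h k j * (err w' h' k j - err w h k j)
  <= loss w' h' - loss w h.
Proof.
rewrite /Defs.loss -mulrBr -sumrB mulr_sumr; apply: ler_sum => k _.
rewrite -sumrB mulr_sumr; apply: ler_sum => j _.
have := sqr_ge0 (err w' h' k j - err w h k j); nra.
Qed.

Lemma sum_err_perturb w h h' (dw : H -> 'rV[R]_d) :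
  (forall i j, grad_h w h i j = 0) ->
  \sum_k \sum_j err w h k j * \sum_i ((h' j i - h j i) * rho (preact w i k)
       + h' j i * rho_dir (preact w i k) (dot (dw i) (x k)))
  = \sum_i \sum_j h' j i * dderiv_wj w h i j (dw i).
Proof.
move=> G0; under eq_bigr => k _ do under eq_bigr => j _ do rewrite mulr_sumr.
rewrite exchange_big; under eq_bigr => j _ do rewrite exchange_big.
rewrite exchange_big; apply: eq_bigr => i _ /=; apply: eq_bigr => j _.
have := G0 i j; rewrite /grad_h /dderiv_wj mulr_sumr => G0ij.
transitivity (\sum_k ((h' j i - h j i) * (err w h k j * rho (preact w i k))
   + h' j i * (err w h k j * rho_dir (preact w i k) (dot (dw i) (x k))))).
  by apply: eq_bigr => k _; ring.
by rewrite big_split /= -!mulr_sumr G0ij mulr0 add0r.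
Qed.

Lemma local_min_of_dderiv_bound w h C :
  (forall i j, grad_h w h i j = 0) -> (forall i u, 0 <= dderiv_w w h i u) ->
  (forall i j u, `|dderiv_wj w h i j u| <= C * dderiv_w w h i u) ->
  local_min ap am x y w h.
Proof.
move=> G0 g_ge0 D_le; pose nx k := \sum_c `|x k ord0 c|.
have small_e : \forall e \near 0^'+, [/\ 0 < e, `|e * (C * #|J|%:R)| < `|1| &
    forall ik : H * K, preact w ik.1 ik.2 != 0 ->
      `|e * nx ik.2| < `|preact w ik.1 ik.2|].
  near=> e; split.
  - by near: e; exact: nbhs_right_gt.
  - by near: e; exact: near_right0_mul_lt (oner_neq0 _).
  - near: e; apply: filter_forall => -[i k] /=.
    have [->|z0] := eqVneq (preact w i k) 0; first exact: nearW.
    by apply: filterS (near_right0_mul_lt (nx k) z0) => e lt _.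
have [e [e_gt0 eC e_small]] := filter_ex small_e.
exists e => // w' h' w_near h_near.
have eC1 : e * (C * #|J|%:R) <= 1.
  by move: eC; rewrite normr1 => /(le_lt_trans (ler_norm _)) /ltW.
have dw_small i k : preact w i k != 0 ->
    `|dot (w' i - w i) (x k)| < `|preact w i k|.
  move=> z0; apply: le_lt_trans (e_small (i, k) z0).
  apply: le_trans (ler_norm _).
  by apply: dot_entry_bound => c; rewrite !mxE ltW ?w_near.
rewrite -subr_ge0; apply: le_trans (loss_sub_ge w h w' h').
under eq_bigr => k _ do under eq_bigr => j _ do
  rewrite (@err_perturb w w' h h' k j (dw_small^~ k)) (addrC (err w h k j))
    addrK.
rewrite (@sum_err_perturb w h h' (fun i => w' i - w i) G0).
apply: sumr_ge0 => i _.
by apply: (@sum_perturbed_weights_ge0 _ _ (h^~ i) _ _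
  (dderiv_w w h i (w' i - w i)) C e).
Unshelve. all: by end_near.
Qed.

Lemma local_min_of_no_escape w h : stationary ap am x y w h ->
  (forall i, ~ escape_neuron ap am x y w h i) -> local_min ap am x y w h.
Proof.
move=> /stationary_dderivP /dderiv_loss_ge0P[G0 g_ge0] no_esc.
have bound (ij : H * J) : exists C, 0 <= C /\
    forall u, `|dderiv_wj w h ij.1 ij.2 u| <= C * dderiv_w w h ij.1 u.
  have [C C_ge0 bound] := @dderiv_wj_bound w h ij.1 ij.2 (g_ge0 ij.1)
    (fun u g0 => dderiv_wj0_of_no_escape (G0 ij.1) (no_esc ij.1) g0 ij.2).
  by exists C.
have [C C_spec] := boolp.choice bound.
apply: (@local_min_of_dderiv_bound _ _ (\sum_ij C ij)) => // i j u.
apply: le_trans (proj2 (C_spec (i, j)) u) _; rewrite ler_wpM2r //.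
rewrite (bigD1 (i, j)) //= lerDl sumr_ge0 // => ij _.
by case: (C_spec ij).
Qed.

Lemma type1_local_minP w h : type1_local_min ap am x y w h <->
  stationary ap am x y w h /\ forall i, ~ escape_neuron ap am x y w h i.
Proof.
split=> [[_ [st no_esc]] // | [st no_esc]].
by split; [exact: local_min_of_no_escape | split].
Qed.

End Hidden.
End Network.

(** * Unit replication *)

Section Replication.
Variables (R : realType) (d : nat) (ap am : R) (I J K L : finType).
Variables (x : K -> 'rV[R]_d) (y : K -> J -> R).
Variables (w : I -> 'rV[R]_d) (h : J -> I -> R) (i0 : I) (beta gamma : L -> R).
Hypothesis beta_gt0 : forall l, 0 < beta l.
Hypothesis sum_beta_gamma : \sum_l beta l * gamma l = 1.
Local Notation w' := (@rep_w R d I L i0 beta w).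
Local Notation h' := (@rep_h R J I L i0 gamma h).
Local Notation rho := (@Defs.rho R ap am).
Local Notation dot := (@dotv R d).
Local Notation tan_deriv0 :=
  (forall v, tangential (w i0) v -> tanderiv ap am x y w h i0 v = 0).

Lemma output_rep z j : output ap am w' h' z j = output ap am w h z j.
Proof.
rewrite /output big_sumType /= -(big_sub (fun i => i != i0)
  (fun i => h j i * rho (dot (w i) z))) [RHS](bigD1 i0) //= addrC.
congr (_ + _); rewrite -[RHS]mul1r -sum_beta_gamma mulr_suml.
by apply: eq_bigr => l _; rewrite dotZl rho_pmul ?ltW //; ring.
Qed.

Lemma err_rep : err ap am x y w' h' = err ap am x y w h.
Proof.
by apply/funext => k; apply/funext => j; rewrite /Defs.err output_rep.
Qed.

Lemma grad_h_rep_inl i j :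
  grad_h ap am x y w' h' (inl i) j = grad_h ap am x y w h (val i) j.
Proof. by rewrite /grad_h err_rep. Qed.

Lemma grad_h_rep_inr l j :
  grad_h ap am x y w' h' (inr l) j = beta l * grad_h ap am x y w h i0 j.
Proof.
rewrite /grad_h err_rep mulr_sumr; apply: eq_bigr => k _.
by rewrite /preact /= dotZl rho_pmul ?ltW //; ring.
Qed.

Lemma dderiv_wj_rep_inl i j u :
  dderiv_wj ap am x y w' h' (inl i) j u = dderiv_wj ap am x y w h (val i) j u.
Proof. by rewrite /dderiv_wj err_rep. Qed.

Lemma dderiv_wj_rep_inr l j u :
  dderiv_wj ap am x y w' h' (inr l) j u = dderiv_wj ap am x y w h i0 j u.
Proof.
rewrite /dderiv_wj err_rep; apply: eq_bigr => k _.
by rewrite /preact /= dotZl rho_dir_pmull.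
Qed.

Lemma dderiv_w_rep_inl i u :
  dderiv_w ap am x y w' h' (inl i) u = dderiv_w ap am x y w h (val i) u.
Proof. by apply: eq_bigr => j _; rewrite dderiv_wj_rep_inl. Qed.

Lemma dderiv_w_rep_inr l u :
  dderiv_w ap am x y w' h' (inr l) u = gamma l * dderiv_w ap am x y w h i0 u.
Proof.
rewrite /dderiv_w mulr_sumr; apply: eq_bigr => j _.
by rewrite dderiv_wj_rep_inr mulrA.
Qed.

Lemma tangential_rep_inr l v :
  tangential (w' (inr l)) v <-> tangential (w i0) v.
Proof.
have beta_neq0 := gt_eqF (beta_gt0 l).
rewrite /tangential /= scaler_eq0 beta_neq0 /= dotZl.
split=> -[vv ortho]; split=> // w0; last by rewrite ortho ?mulr0.
by apply/eqP; move/eqP: (ortho w0); rewrite mulf_eq0 beta_neq0.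
Qed.

Lemma escape_rep_inl i :
  escape_neuron ap am x y w' h' (inl i) <-> escape_neuron ap am x y w h (val i).
Proof.
rewrite !escape_neuronE; split=> -[j [v [tv t0 dv]]]; exists j, v; split=> //.
- by rewrite -dderiv_w_rep_inl.
- by rewrite -(dderiv_wj_rep_inl i).
- by rewrite dderiv_w_rep_inl.
- by rewrite dderiv_wj_rep_inl.
Qed.

Lemma escape_rep_inr l : escape_neuron ap am x y w' h' (inr l) <->
  exists j v, [/\ tangential (w i0) v, gamma l * dderiv_w ap am x y w h i0 v = 0
                & dderiv_wj ap am x y w h i0 j v != 0].
Proof.
rewrite escape_neuronE; split=> -[j [v [tv t0 dv]]]; exists j, v; split.
- by rewrite -(tangential_rep_inr l).
- by rewrite -dderiv_w_rep_inr.
- by rewrite -(dderiv_wj_rep_inr l).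
- by rewrite tangential_rep_inr.
- by rewrite dderiv_w_rep_inr.
- by rewrite dderiv_wj_rep_inr.
Qed.

Lemma stationary_rep_dderivP : stationary ap am x y w h ->
  stationary ap am x y w' h' <->
  forall l u, 0 <= gamma l * dderiv_w ap am x y w h i0 u.
Proof.
move=> /stationary_dderivP/dderiv_loss_ge0P[G0 g_ge0].
split=> [/stationary_dderivP/dderiv_loss_ge0P[_ g'_ge0] l u | gamma_g_ge0].
  by rewrite -dderiv_w_rep_inr.
apply/stationary_dderivP/dderiv_loss_ge0P; split.
  by case=> [i|l] j; rewrite ?grad_h_rep_inl ?grad_h_rep_inr G0 ?mulr0.
by case=> [i|l] u; rewrite ?dderiv_w_rep_inl ?dderiv_w_rep_inr.
Qed.

Lemma stationary_repP : stationary ap am x y w h ->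
  stationary ap am x y w' h' <-> tan_deriv0 \/ forall l, 0 <= gamma l.
Proof.
move=> st; have /stationary_dderivP/dderiv_loss_ge0P[G0 g_ge0] := st.
have tan0P := tanderiv0P (G0 i0).
apply: (iff_trans (stationary_rep_dderivP st)).
split=> [gamma_g_ge0 | [/tan0P g0 l u | gamma_ge0 l u]]; last first.
- by rewrite mulr_ge0.
- by rewrite g0 mulr0.
have [|/boolp.existsNP[l /negP]] := boolp.pselect (forall l, 0 <= gamma l).
  by right.
rewrite -ltNge => gamma_lt0; left; apply/tan0P => u; apply/le_anti.
by rewrite g_ge0 andbT -(nmulr_rge0 _ gamma_lt0) gamma_g_ge0.
Qed.

Lemma type1_repP : type1_local_min ap am x y w h ->
  type1_local_min ap am x y w' h' <-> tan_deriv0 \/ forall l, 0 < gamma l.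
Proof.
move=> /type1_local_minP[st no_esc].
have /stationary_dderivP/dderiv_loss_ge0P[G0 _] := st.
have tan0P := tanderiv0P (G0 i0).
split=> [/type1_local_minP[st' no_esc'] | cond].
  have [tan0|gamma_ge0] := (stationary_repP st).1 st'; first by left.
  have [tan0|not_tan0] := boolp.pselect tan_deriv0; [by left | right=> l].
  rewrite lt_def gamma_ge0 andbT; apply/eqP => gamma0; apply: not_tan0 => v tv.
  have [//|tan_neq0] := eqVneq (tanderiv ap am x y w h i0 v) 0.
  have : ~~ [forall j, dderiv_wj ap am x y w h i0 j v == 0].
    apply: contra tan_neq0 => /forallP D0; apply/eqP.
    rewrite tanderiv_dderiv_w /dderiv_w big1 // => j _.
    by rewrite (eqP (D0 j)) mulr0.
  rewrite negb_forall => /existsP[j Dj]; case: (no_esc' (inr l)).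
  by apply/escape_rep_inr; exists j, v; rewrite gamma0 mul0r.
apply/type1_local_minP; split.
  apply/(stationary_repP st); case: cond => [|gamma_gt0]; first by left.
  by right=> l; exact: ltW.
case=> [i /escape_rep_inl | l /escape_rep_inr[j [v [tv gv0 Dv]]]].
  exact: no_esc.
apply: (no_esc i0); apply/escape_neuronE; exists j, v; split=> //.
case: cond => [/tan0P -> // | gamma_gt0].
by move/eqP: gv0; rewrite mulf_eq0 gt_eqF // => /eqP.
Qed.

End Replication.

Theorem proposition1 (R : realType) (d : nat) (ap am : R)
  (I J K L : finType) (x : K -> 'rV[R]_d) (y : K -> J -> R)
  (w : I -> 'rV[R]_d) (h : J -> I -> R) (i0 : I) (beta gamma : L -> R) :
  (1 < d)%N -> ap != am ->
  stationary ap am x y w h ->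
  (forall l, 0 < beta l) -> \sum_(l : L) beta l * gamma l = 1 ->
  let w' := @rep_w R d I L i0 beta w in
  let h' := @rep_h R J I L i0 gamma h in
  let cond1 := forall v : 'rV[R]_d,
      tangential (w i0) v -> tanderiv ap am x y w h i0 v = 0 in
  (stationary ap am x y w' h' <-> (cond1 \/ forall l, 0 <= gamma l)) /\
  (type1_local_min ap am x y w h ->
     (type1_local_min ap am x y w' h' <-> (cond1 \/ forall l, 0 < gamma l))).
Proof.
move=> _ _ st beta_gt0 sum_beta_gamma w' h' cond1.
split; first exact: stationary_repP.
exact: type1_repP.
Qed.
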